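(* The open set $\mathcal T_+\setminus\mathcal L$ is connected and simply connected.
   Context: Let $d\ge2$ and let $\Pi_0^{(c)}=\mathbb C^{d}$ with coordinates $z^0,\dots,z^{d-1}$ and bilinear form $(z,z')=z^0z'^0-\sum_{j=1}^{d-1}z^jz'^j$ (complex Minkowski space). The future tube is $\mathcal T_+=\{X+iY\in\Pi_0^{(c)}: X,Y\in\mathbb R^d,\ (Y,Y)>0,\ Y^0>0\}$, and $\mathcal L=\{z\in\Pi_0^{(c)}:(z,z)+1\in(-\infty,0]\}$. *)

From HB Require Import structures.
From mathcomp Require Import all_boot all_order all_algebra.
From mathcomp Require Import all_classical all_reals all_analysis.
From mathcomp Require Import complex.
Set Implicit Arguments. Unset Strict Implicit. Unset Printing Implicit Defensive.
Import Order.TTheory GRing.Theory Num.Theory.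
Import numFieldTopology.Exports numFieldNormedType.Exports.
Local Open Scope classical_set_scope.
Local Open Scope ring_scope.

(* A point z = X + iY of complex Minkowski space C^d is represented by the
   pair (X, Y) of real row vectors; the topology is the product topology
   on R^d x R^d, i.e. the usual topology of C^d = R^(2d). *)
Notation cpoint R d := ('rV[R]_d * 'rV[R]_d)%type.

Definition ccoord (R : realType) (d : nat) (z : cpoint R d) (j : 'I_d) : R[i] :=
  (z.1 0 j +i* z.2 0 j)%C.

Definition msign (F : ringType) (d : nat) (j : 'I_d) : F :=
  if val j == 0%N then 1 else -1.

Definition cform (R : realType) (d : nat) (z z' : cpoint R d) : R[i] :=
  \sum_(j < d) msign _ j * ccoord z j * ccoord z' j.

Definition rform (R : realType) (d : nat) (Y Y' : 'rV[R]_d) : R :=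
  \sum_(j < d) msign _ j * Y 0 j * Y' 0 j.

Definition coord0 (R : realType) (d : nat) (Y : 'rV[R]_d) : R :=
  \sum_(j < d | val j == 0%N) Y 0 j.

Definition future_tube (R : realType) (d : nat) : set (cpoint R d) :=
  [set z | 0 < rform z.2 z.2 /\ 0 < coord0 z.2].

(* L = { z | (z,z) + 1 in (-oo, 0] }; in the numClosedField R[i],
   w <= 0 means exactly that w is real and nonpositive. *)
Definition cutL (R : realType) (d : nat) : set (cpoint R d) :=
  [set z | cform z z + 1 <= 0].

Definition path_connected_set (R : realType) (T : topologicalType) (A : set T) :=
  forall x y, A x -> A y ->
    exists g : R -> T, [/\ {within `[0, 1], continuous g},
      g @` `[0, 1] `<=` A, g 0 = x & g 1 = y].

Definition simply_connected (R : realType) (T : topologicalType) (A : set T) :=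
  path_connected_set R A /\
  forall g : R -> T,
    {within `[0, 1], continuous g} -> g @` `[0, 1] `<=` A -> g 0 = g 1 ->
    exists H : R * R -> T,
      [/\ {within `[0, 1] `*` `[0, 1], continuous H},
          H @` (`[0, 1] `*` `[0, 1]) `<=` A,
          (forall t, t \in `[0, 1] -> H (t, 0) = g t /\ H (t, 1) = g 0) &
          (forall s, s \in `[0, 1] -> H (0, s) = g 0 /\ H (1, s) = g 0)].

Arguments future_tube : clear implicits.
Arguments cutL : clear implicits.
Arguments simply_connected R {T} A.
Arguments path_connected_set R {T} A.

From Pilot Require Import Defs.
From HB Require Import structures.
From mathcomp Require Import all_boot all_order all_algebra.
From mathcomp Require Import all_classical all_reals all_analysis.
From mathcomp Require Import complex ring lra.
Import Order.TTheory GRing.Theory Num.Theory.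
Import numFieldTopology.Exports numFieldNormedType.Exports.
Local Open Scope classical_set_scope.
Local Open Scope ring_scope.

(* For z = X + iY one has (z,z) = (X,X) - (Y,Y) + 2i(X,Y), so z lies on L iff
   (X,Y) = 0 and (X,X) - (Y,Y) <= -1.  Hence T_+ \ L is stable under the
   contractions z |-> l z with 0 < l <= 1, and near the origin it coincides
   with the convex tube T_+.  Given a base point b and a bound M, every z with
   |z| <= M is deformed onto b inside T_+ \ L: shrink z towards the origin,
   slide it along a segment of T_+ to the shrunk copy of b, and blow it back up
   to b.  Near b no shrinking is needed, since a ball around b lies in the open
   set T_+ \ L; switching the shrinking off there keeps b fixed, so loops
   based at b contract relative to the base point. *)

Section Ramp.
Context {R : realType}.

Definition ramp (x : R) : R := Num.min 1 (Num.max 0 x).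

Lemma ramp_ge0 x : 0 <= ramp x.
Proof. by rewrite le_min le_max lexx ler01. Qed.

Lemma ramp_le1 x : ramp x <= 1.
Proof. by rewrite ge_min lexx. Qed.

Lemma ramp_le0 x : x <= 0 -> ramp x = 0.
Proof. by move=> x0; rewrite /ramp (max_idPl x0); apply/min_idPr. Qed.

Lemma ramp_ge1 x : 1 <= x -> ramp x = 1.
Proof. by move=> x1; apply/min_idPl; rewrite le_max x1 orbT. Qed.

Lemma continuous_ramp : continuous ramp.
Proof.
move=> x; apply: continuous_min; first exact: cvg_cst.
by apply: continuous_max; [exact: cvg_cst | exact: cvg_id].
Qed.

Definition travel (s : R) : R := ramp (3 * s - 1).
Definition shrink (s : R) : R := ramp (Num.min (3 * s) (3 - 3 * s)).

Lemma travel0 : travel 0 = 0.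
Proof. by rewrite /travel ramp_le0 // mulr0 sub0r lerN10. Qed.

Lemma travel1 : travel 1 = 1.
Proof. by rewrite /travel ramp_ge1 // mulr1; lra. Qed.

Lemma shrink0 : shrink 0 = 0.
Proof. by rewrite /shrink ramp_le0 // ge_min mulr0 lexx. Qed.

Lemma shrink1 : shrink 1 = 0.
Proof. by rewrite /shrink ramp_le0 // ge_min mulr1 subrr lexx orbT. Qed.

Lemma travel_shrink_cases s :
  [\/ travel s = 0, travel s = 1 | shrink s = 1].
Proof.
have [s1|s1] := lerP (3 * s - 1) 0; first by constructor 1; apply: ramp_le0.
have [s2|s2] := lerP 1 (3 * s - 1); first by constructor 2; apply: ramp_ge1.
by constructor 3; apply: ramp_ge1; rewrite le_min; apply/andP; split; lra.
Qed.

Lemma continuous_travel : continuous travel.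
Proof.
move=> s; apply: (@continuous_comp _ _ _ (fun s : R => 3 * s - 1) ramp).
  by apply: cvgB; [apply: cvgM; [exact: cvg_cst | exact: cvg_id] | exact: cvg_cst].
exact: continuous_ramp.
Qed.

Lemma continuous_shrink : continuous shrink.
Proof.
move=> s; apply: (@continuous_comp _ _ _ (fun s : R => Num.min (3 * s) (3 - 3 * s)) ramp).
  apply: continuous_min; first by apply: cvgM; [exact: cvg_cst | exact: cvg_id].
  by apply: cvgB; [exact: cvg_cst | apply: cvgM; [exact: cvg_cst | exact: cvg_id]].
exact: continuous_ramp.
Qed.

End Ramp.

Lemma ball_lerp_center (R : numFieldType) (V : normedModType R) (b z : V) (r s : R) :
  0 <= s <= 1 -> ball b r z -> ball b r ((1 - s) *: z + s *: b).
Proof.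
move=> /andP[s0 s1]; rewrite -!ball_normE /ball_ /= => bz.
have -> : b - ((1 - s) *: z + s *: b) = (1 - s) *: (b - z).
  by rewrite scalerBr scalerBl scale1r opprD addrA scalerBl scale1r addrAC.
rewrite normrZ ger0_norm ?subr_ge0 //.
by apply: le_lt_trans bz; rewrite ler_piMl // lerBlDr lerDl.
Qed.

Lemma sum_complex (R : rcfType) (I : Type) (r : seq I) (P : pred I) (F G : I -> R) :
  \sum_(i <- r | P i) (F i +i* G i)%C =
  ((\sum_(i <- r | P i) F i) +i* (\sum_(i <- r | P i) G i))%C.
Proof.
by elim: r => [|i r IH]; rewrite ?big_nil ?big_cons //; case: (P i); rewrite IH.
Qed.

Lemma continuous_within_homotopy {R : realType} {T U : topologicalType}
    {A B : set R} {g : R -> T} {Phi : T * R -> U} :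
  {within A, continuous g} -> continuous Phi ->
  {within A `*` B, continuous (fun p => Phi (g p.1, p.2))}.
Proof.
move=> g_c Phi_c; apply/continuous_subspace_prodP => p _.
pose F (q : subspace A * subspace B) := (from_subspace A g q.1, incl_subspace q.2).
suff F_c : {for p, continuous F} by exact (@continuous_comp _ _ _ F Phi p F_c (Phi_c _)).
have g_c' : {for p, continuous (fun q : subspace A * subspace B => from_subspace A g q.1)}.
  by apply: continuous_comp; [exact: cvg_fst | exact: g_c].
have incl_c : {for p, continuous (fun q : subspace A * subspace B => @incl_subspace _ B q.2)}.
  by apply: (@continuous_comp _ _ _ snd (@incl_subspace _ B));
    [exact: cvg_snd | exact: incl_subspace_continuous].
exact (cvg_pair g_c' incl_c).
Qed.

Lemma path_connected_set_connected {R : realType} {T : topologicalType} {A : set T} :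
  path_connected_set R A -> connected A.
Proof.
move=> A_pc; have [[a Aa]|A0] := pselect (exists a, A a); last first.
  suff -> : A = set0 by exact: connected0.
  by apply/seteqP; split => x // Ax; apply: A0; exists x.
pose paths (g : R -> T) := [/\ {within `[0, 1], continuous g}, g @` `[0, 1] `<=` A & g 0 = a].
have -> : A = \bigcup_(g in paths) (g @` `[0, 1]).
  apply/seteqP; split => [x Ax|x [g [_ gA _] gx]]; last exact: gA.
  have [g [g_c gA g0 g1]] := A_pc _ _ Aa Ax.
  by exists g => //; exists 1 => //; rewrite /= in_itv /= lexx ler01.
apply: bigcup_connected.
  by exists a => g [_ _ g0]; exists 0 => //; rewrite /= in_itv /= lexx ler01.
by move=> g [g_c _ _]; apply: connected_continuous_connected => //; exact: segment_connected.
Qed.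

Section Minkowski.
Variables (R : realType) (d : nat).
Hypothesis d_gt0 : (0 < d)%N.
Let j0 : 'I_d := Ordinal d_gt0.
Local Notation point := (Defs.cpoint R d).

Definition spatial_dot (X Y : 'rV[R]_d) := \sum_(j < d | j != j0) X 0 j * Y 0 j.

Lemma rformE (X Y : 'rV[R]_d) : rform X Y = X 0 j0 * Y 0 j0 - spatial_dot X Y.
Proof.
rewrite /rform (bigD1 j0) //= /msign eqxx mul1r -sumrN.
congr (_ + _); apply: eq_bigr => j; rewrite -(inj_eq val_inj) /= => /negbTE ->.
by rewrite mulN1r mulNr.
Qed.

Lemma coord0E (Y : 'rV[R]_d) : Defs.coord0 Y = Y 0 j0.
Proof. by rewrite /Defs.coord0 (big_pred1 j0) // => j; rewrite -(inj_eq val_inj). Qed.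

Lemma rformZ (a : R) (X Y : 'rV[R]_d) : rform (a *: X) (a *: Y) = a ^+ 2 * rform X Y.
Proof. by rewrite /rform mulr_sumr; apply: eq_bigr => j _; rewrite !mxE; ring. Qed.

Lemma rformDD (X Y : 'rV[R]_d) :
  rform (X + Y) (X + Y) = rform X X + 2 * rform X Y + rform Y Y.
Proof.
rewrite /rform mulr_sumr -!big_split /=.
by apply: eq_bigr => j _; rewrite !mxE; ring.
Qed.

Lemma cformE (z : point) :
  cform z z = ((rform z.1 z.1 - rform z.2 z.2) +i* (2 * rform z.1 z.2))%C.
Proof.
rewrite /cform /rform -sumrB mulr_sumr -sum_complex; apply: eq_bigr => j _.
rewrite /ccoord /msign; case: ifP => _; apply/eqP; rewrite eq_complex /=;
  by apply/andP; split; apply/eqP; ring.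
Qed.

Lemma cutLE (z : point) :
  cutL R d z <-> rform z.1 z.2 = 0 /\ rform z.1 z.1 - rform z.2 z.2 + 1 <= 0.
Proof.
rewrite /cutL /= cformE lecE /= addr0 eq_sym mulf_eq0 pnatr_eq0 /=.
by split => [/andP[/eqP]|[-> ->]] //; rewrite eqxx.
Qed.

Definition future_cone (Y : 'rV[R]_d) := 0 < rform Y Y /\ 0 < Defs.coord0 Y.

(* Reverse Cauchy-Schwarz: expand 0 <= sum_(j != 0) (Y^0 X^j - X^0 Y^j)^2. *)
Lemma rform_future_gt0 (X Y : 'rV[R]_d) :
  future_cone X -> future_cone Y -> 0 < rform X Y.
Proof.
rewrite /future_cone !coord0E !rformE => -[hX hA] [hY hB].
set A := X 0 j0 in hX hA *; set B := Y 0 j0 in hY hB *.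
have sq : 0 <= B ^+ 2 * spatial_dot X X - 2 * A * B * spatial_dot X Y
                + A ^+ 2 * spatial_dot Y Y.
  rewrite /spatial_dot !mulr_sumr -sumrB -big_split /=.
  apply: sumr_ge0 => j _.
  by rewrite (_ : _ + _ = (B * X 0 j - A * Y 0 j) ^+ 2) ?sqr_ge0 //; ring.
have eX : 0 < B ^+ 2 * (A * A - spatial_dot X X) by rewrite mulr_gt0 ?exprn_gt0.
have eY : 0 < A ^+ 2 * (B * B - spatial_dot Y Y) by rewrite mulr_gt0 ?exprn_gt0.
have AB : 0 < A * B by rewrite mulr_gt0.
have : A * B * spatial_dot X Y < A * B * (A * B) by nra.
by rewrite ltr_pM2l // subr_gt0.
Qed.

Lemma future_coneD (X Y : 'rV[R]_d) :
  future_cone X -> future_cone Y -> future_cone (X + Y).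
Proof.
move=> cX cY; have XY := rform_future_gt0 _ _ cX cY.
move: cX cY; rewrite /future_cone !coord0E rformDD mxE => -[? ?] [? ?].
by split; lra.
Qed.

Lemma future_coneZ (a : R) (Y : 'rV[R]_d) :
  0 < a -> future_cone Y -> future_cone (a *: Y).
Proof.
rewrite /future_cone !coord0E rformZ mxE => a0 [? ?].
by split; rewrite mulr_gt0 ?exprn_gt0.
Qed.

Lemma future_cone_lerp (s : R) (X Y : 'rV[R]_d) : 0 <= s <= 1 ->
  future_cone X -> future_cone Y -> future_cone ((1 - s) *: X + s *: Y).
Proof.
move=> /andP[s0 s1] cX cY.
have [->|s_neq0] := eqVneq s 0; first by rewrite subr0 scale1r scale0r addr0.
have [->|s_neq1] := eqVneq s 1; first by rewrite subrr scale0r add0r scale1r.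
apply: future_coneD; apply: future_coneZ => //.
  by rewrite subr_gt0 lt_neqAle s_neq1.
by rewrite lt_neqAle eq_sym s_neq0.
Qed.

Local Notation region := (future_tube R d `\` cutL R d).

Lemma region_scale (l : R) (z : point) : 0 < l <= 1 -> region z -> region (l *: z).
Proof.
move=> /andP[l0 l1] [tz nLz]; split; first exact: future_coneZ.
rewrite cutLE /= !rformZ -mulrBr => -[XY0 pL]; apply/nLz/cutLE; split.
  by move/eqP: XY0; rewrite mulf_eq0 expf_eq0 gt_eqF //= => /eqP.
set p := _ - _ in pL *.
have l2 : 0 < l ^+ 2 <= 1 by rewrite exprn_gt0 //= (exprn_ile1 _ (ltW l0) l1).
have p0 : p < 0 by nra.
nra.
Qed.

Lemma normr_mx_coord_le {K : realDomainType} {m n} (A : 'M[K]_(m, n)) i j :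
  `|A i j| <= `|A|.
Proof. by rewrite [leRHS]mx_normrE; apply: (le_bigmax _ _ (i, j)). Qed.

Lemma spatial_dot_ge0 (X : 'rV[R]_d) : 0 <= spatial_dot X X.
Proof. by apply: sumr_ge0 => j _; rewrite -expr2 sqr_ge0. Qed.

Lemma spatial_dot_le (X : 'rV[R]_d) (r : R) :
  (forall j, `|X 0 j| <= r) -> spatial_dot X X <= d%:R * r ^+ 2.
Proof.
move=> Xr; rewrite /spatial_dot big_mkcond /=.
apply: (@le_trans _ _ (\sum_(j < d) r ^+ 2)); last first.
  by rewrite sumr_const card_ord mulr_natl.
apply: ler_sum => j _; case: ifP => _; last exact: sqr_ge0.
by have /ler_normlP[] := Xr j; nra.
Qed.

Lemma cutL_small (z : point) : (d%:R + 1) * `|z| < 1 -> ~ cutL R d z.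
Proof.
move=> small /cutLE[_]; rewrite !rformE.
have X1 : `|z.1| <= `|z| by rewrite prod_normE le_max lexx.
have Y1 : `|z.2| <= `|z| by rewrite prod_normE le_max lexx orbT.
have := spatial_dot_le z.1 `|z| (fun j => le_trans (normr_mx_coord_le z.1 0 j) X1).
have /ler_normlP[? ?] := le_trans (normr_mx_coord_le z.2 0 j0) Y1.
have := spatial_dot_ge0 z.2; have := sqr_ge0 (z.1 0 j0).
have : (d%:R + 1) * `|z| ^+ 2 < 1.
  have := normr_ge0 z; have := ler0n R d; nra.
nra.
Qed.

Lemma continuous_rform (T : topologicalType) (f g : T -> 'rV[R]_d) :
  continuous f -> continuous g -> continuous (fun t => rform (f t) (g t)).
Proof.
move=> fc gc; apply: continuous_big => [|j _ t]; first exact: add_continuous.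
have coordc (h : T -> 'rV[R]_d) : continuous h -> {for t, continuous (fun t => h t 0 j)}.
  by move=> hc; apply: (@continuous_comp _ _ _ h (fun Y => Y 0 j));
    [exact: hc | exact: coord_continuous].
by apply: cvgM; [apply: cvgM; [exact: cvg_cst | exact: coordc] | exact: coordc].
Qed.

Lemma open_future_tube : open (future_tube R d).
Proof.
have -> : future_tube R d = (fun z : point => rform z.2 z.2) @^-1` [set x | 0 < x]
    `&` (fun z : point => z.2 0 j0) @^-1` [set x | 0 < x].
  by apply/seteqP; split => z; rewrite /future_tube /= coord0E.
apply: openI; apply: open_comp; try exact: open_gt.
  by move=> z _; apply: continuous_rform => p; exact: cvg_snd.
move=> z _; apply: (@continuous_comp _ _ _ snd (fun Y : 'rV[R]_d => Y 0 j0)).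
  exact: cvg_snd.
exact: coord_continuous.
Qed.

Lemma closed_cutL : closed (cutL R d).
Proof.
have -> : cutL R d = (fun z : point => rform z.1 z.2) @^-1` [set x | x = 0]
    `&` (fun z : point => rform z.1 z.1 - rform z.2 z.2 + 1) @^-1` [set x | x <= 0].
  by apply/seteqP; split => z /=; rewrite cutLE.
have [fst_c snd_c] : continuous (@fst 'rV[R]_d 'rV[R]_d) /\ continuous (@snd 'rV[R]_d 'rV[R]_d).
  by split => z; [exact: cvg_fst | exact: cvg_snd].
apply: closedI; apply: preimage_closed; try exact: closed_eq; try exact: closed_le.
  by move=> z _; apply: continuous_rform.
move=> z _; apply: cvgD; last exact: cvg_cst.
by apply: cvgB; apply: continuous_rform.
Qed.

Lemma open_region : open region.
Proof. exact: openI open_future_tube (closed_openC closed_cutL). Qed.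

Section Deformation.
Variables (b : point) (del e : R).

Definition dist_ratio (z : point) : R := Num.min 1 (`|b - z| / del).

(* Shrink for s in [0, 1/3], slide towards b for s in [1/3, 2/3], blow up
   again for s in [2/3, 1]; the shrinking factor e is only fully applied at
   distance >= del from b. *)
Definition deform (p : point * R) : point :=
  (1 - shrink p.2 * dist_ratio p.1 * (1 - e)) *:
    ((1 - travel p.2) *: p.1 + travel p.2 *: b).

Lemma deform_at0 (z : point) : deform (z, 0) = z.
Proof. by rewrite /deform /= shrink0 travel0 !mul0r !subr0 !scale1r scale0r addr0. Qed.

Lemma deform_at1 (z : point) : deform (z, 1) = b.
Proof. by rewrite /deform /= shrink1 travel1 !mul0r subr0 subrr !scale1r scale0r add0r. Qed.

Lemma deform_center (s : R) : deform (b, s) = b.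
Proof.
rewrite /deform /dist_ratio /= subrr normr0 mul0r (min_idPr ler01).
by rewrite mulr0 mul0r subr0 scale1r -scalerDl subrK scale1r.
Qed.

Lemma continuous_deform : continuous deform.
Proof.
have ratio_c : continuous dist_ratio.
  have -> : dist_ratio = (fun=> 1) \min (fun z => `|b - z| / del) by [].
  move=> z; apply: continuous_min; first exact: cvg_cst.
  apply: cvgM; last exact: cvg_cst.
  by apply: cvg_norm; apply: cvgB; [exact: cvg_cst | exact: cvg_id].
have shrink_c : continuous (fun p : point * R => shrink p.2).
  by move=> p; apply: (@continuous_comp _ _ _ snd shrink);
    [exact: cvg_snd | exact: continuous_shrink].
have travel_c : continuous (fun p : point * R => travel p.2).
  by move=> p; apply: (@continuous_comp _ _ _ snd travel);
    [exact: cvg_snd | exact: continuous_travel].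
move=> p; apply: cvgZ.
  apply: cvgB; first exact: cvg_cst.
  apply: cvgM; last exact: cvg_cst.
  apply: cvgM; first exact: shrink_c.
  by apply: (@continuous_comp _ _ _ fst dist_ratio); [exact: cvg_fst | exact: ratio_c].
apply: cvgD; apply: cvgZ.
- by apply: cvgB; [exact: cvg_cst | exact: travel_c].
- exact: cvg_fst.
- exact: travel_c.
- exact: cvg_cst.
Qed.

Lemma deform_region (M : R) (z : point) (s : R) :
  0 < del -> ball b del `<=` region -> `|b| <= M ->
  0 < e -> e <= 1 -> (d%:R + 1) * (e * M) < 1 ->
  region z -> `|z| <= M -> region (deform (z, s)).
Proof.
move=> del_gt0 ball_region bM e_gt0 e_le1 e_small zS zM; rewrite /deform /=.
have bS : region b := ball_region _ (ballxx b del_gt0).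
set w := (1 - travel s) *: z + travel s *: b.
have t01 : 0 <= travel s <= 1 by rewrite ramp_ge0 ramp_le1.
have sh01 : 0 <= shrink s <= 1 by rewrite ramp_ge0 ramp_le1.
have r01 : 0 <= dist_ratio z <= 1.
  by rewrite le_min ler01 ge_min lexx divr_ge0 // ltW.
have scale_w : region w -> region ((1 - shrink s * dist_ratio z * (1 - e)) *: w).
  have /andP[sr0 sr1] : 0 <= shrink s * dist_ratio z <= 1.
    by case/andP: sh01 => ? ?; case/andP: r01 => ? ?; rewrite mulr_ge0 ?mulr_ile1.
  have kap01 : 0 < 1 - shrink s * dist_ratio z * (1 - e) <= 1.
    by apply/andP; split; nra.
  exact: region_scale _ _ kap01.
have [t0|t1|sh1] := travel_shrink_cases s.
- by apply: scale_w; rewrite /w t0 subr0 scale1r scale0r addr0.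
- by apply: scale_w; rewrite /w t1 subrr scale0r add0r scale1r.
have [near_b|far_b] := ltP `|b - z| del.
  apply/scale_w/ball_region/ball_lerp_center => //.
  by rewrite -ball_normE.
have -> : dist_ratio z = 1 by apply/min_idPl; rewrite ler_pdivlMr // mul1r.
rewrite sh1 !mul1r subKr.
have wT : future_tube R d w.
  by apply: future_cone_lerp => //; [case: zS | case: bS].
split; first by apply: future_coneZ.
apply: cutL_small; rewrite normrZ gtr0_norm //.
have wM : `|w| <= M.
  rewrite /w; apply: le_trans (ler_normD _ _) _.
  rewrite !normrZ ger0_norm ?subr_ge0 ?ger0_norm; [nra | by case/andP: t01 ..].
apply: (le_lt_trans _ e_small); apply: ler_wpM2l; first by rewrite addr_ge0 ?ler0n.
by apply: ler_wpM2l; first exact: ltW.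
Qed.

End Deformation.

Lemma region_deformation {b : point} {M : R} : region b -> `|b| <= M ->
  exists Phi : point * R -> point,
  [/\ continuous Phi, (forall z, Phi (z, 0) = z), (forall z, Phi (z, 1) = b),
      (forall s, Phi (b, s) = b) &
      (forall z s, region z -> `|z| <= M -> region (Phi (z, s)))].
Proof.
move=> bS bM; have M0 : 0 <= M := le_trans (normr_ge0 b) bM.
have [del del_gt0 ball_region] : exists2 del : R, 0 < del & ball b del `<=` region.
  by apply/nbhs_ballP; apply: open_nbhs_nbhs; split; [exact: open_region|].
have d1 : 1 <= d%:R + 1 :> R by rewrite lerDr ler0n.
have A_gt0 : 0 < (d%:R + 1) * (M + 1) by rewrite mulr_gt0 //; lra.
pose e := ((d%:R + 1) * (M + 1))^-1.
have e_gt0 : 0 < e by rewrite invr_gt0.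
have eK : e * ((d%:R + 1) * (M + 1)) = 1 by rewrite mulVf // gt_eqF.
have e_le1 : e <= 1 by nra.
have e_small : (d%:R + 1) * (e * M) < 1 by nra.
exists (deform b del e); split.
- exact: continuous_deform.
- exact: deform_at0.
- exact: deform_at1.
- exact: deform_center.
- by move=> z s; apply: deform_region.
Qed.

Lemma path_connected_region : path_connected_set R region.
Proof.
move=> x y xS yS.
have xM : `|x| <= Num.max `|x| `|y| by rewrite le_max lexx.
have yM : `|y| <= Num.max `|x| `|y| by rewrite le_max lexx orbT.
have [Phi [Phi_c Phi0 Phi1 _ Phi_region]] := region_deformation yS yM.
exists (fun s => Phi (x, s)); split => //.
- apply: continuous_subspaceT => s.
  apply: (@continuous_comp _ _ _ (fun s => (x, s)) Phi); last exact: Phi_c.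
  exact: cvg_pair (cvg_cst x) cvg_id.
- by move=> _ [s _ <-]; apply: Phi_region.
Qed.

Lemma region_loop_nullhomotopic (g : R -> point) :
  {within `[0, 1], continuous g} -> g @` `[0, 1] `<=` region -> g 0 = g 1 ->
  exists H : R * R -> point,
    [/\ {within `[0, 1] `*` `[0, 1], continuous H},
        H @` (`[0, 1] `*` `[0, 1]) `<=` region,
        (forall t, t \in `[0, 1] -> H (t, 0) = g t /\ H (t, 1) = g 0) &
        (forall s, s \in `[0, 1] -> H (0, s) = g 0 /\ H (1, s) = g 0)].
Proof.
move=> g_c g_region g01.
have I0 : `[0, 1]%classic (0 : R) by rewrite /= in_itv /= lexx ler01.
have [M0 [_ gM0]] := compact_bounded (continuous_compact g_c (@segment_compact R 0 1)).
have gM t : `[0, 1]%classic t -> `|g t| <= M0 + 1.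
  by move=> t01; apply: (gM0 (M0 + 1)); [rewrite ltrDl | exists t].
have [Phi [Phi_c Phi0 Phi1 Phi_g0 Phi_region]] :=
  region_deformation (g_region _ (imageP _ I0)) (gM 0 I0).
exists (fun p => Phi (g p.1, p.2)); split.
- exact: continuous_within_homotopy g_c Phi_c.
- by move=> _ [[t s] [t01 _] <-]; apply: Phi_region; [apply: g_region; exists t | apply: gM].
- by move=> t _; rewrite Phi0 Phi1.
- by move=> s _; rewrite -g01 Phi_g0.
Qed.

End Minkowski.

Theorem lemma26 (R : realType) (d : nat) (hd : (2 <= d)%N) :
  open (future_tube R d `\` cutL R d) /\
  connected (future_tube R d `\` cutL R d) /\
  simply_connected R (future_tube R d `\` cutL R d).
Proof.
have d_gt0 : (0 < d)%N := ltnW hd.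
have path_conn := @path_connected_region R d d_gt0.
split; first exact: open_region.
split; first exact: path_connected_set_connected path_conn.
by split => // g; apply: region_loop_nullhomotopic.
Qed.
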